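(* Let $(\mathfrak{g},\langle\cdot,\cdot\rangle)$ be a quadratic Lie algebra with $H^2(\mathfrak{g})=\{0\}$ and let $(\mathfrak{h},\theta_1,\dots,\theta_k)$ be a $k$-symplectic structure on $\mathfrak{g}$. Then $\mathfrak{h}$ is degenerate with respect to $\langle\cdot,\cdot\rangle$, i.e. the restriction of $\langle\cdot,\cdot\rangle$ to $\mathfrak{h}$ is degenerate.
   Context: A quadratic Lie algebra is a finite-dimensional real Lie algebra $\mathfrak{g}$ endowed with a nondegenerate symmetric bilinear form $\langle\cdot,\cdot\rangle$ which is invariant: $\langle [u,v],w\rangle+\langle [u,w],v\rangle=0$ for all $u,v,w\in\mathfrak{g}$. $H^2(\mathfrak{g})$ denotes the second Chevalley–Eilenberg cohomology group of $\mathfrak{g}$ with trivial real coefficients. A $k$-symplectic structure on a real Lie algebra $\mathfrak{g}$ of dimension $n(k+1)$ ($n,k\ge1$) is a pair consisting of a Lie subalgebra $\mathfrak{h}\subset\mathfrak{g}$ of dimension $nk$ and a family $(\theta_1,\dots,\theta_k)$ of skew-symmetric bilinear forms on $\mathfrak{g}$ such that: (i) $\bigcap_{i=1}^k\ker\theta_i=\{0\}$, where $\ker\theta_i=\{u\in\mathfrak{g}:\theta_i(u,v)=0\ \forall v\in\mathfrak{g}\}$; (ii) each $\theta_i$ is a 2-cocycle: $\theta_i([u,v],w)+\theta_i([v,w],u)+\theta_i([w,u],v)=0$ for all $u,v,w$; (iii) $\theta_i(u,v)=0$ for all $u,v\in\mathfrak{h}$ and all $i$. *)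

From HB Require Import structures.
From mathcomp Require Import all_boot all_order all_algebra.
From mathcomp Require Import reals.
Unset Printing Implicit Defensive.
Import Order.TTheory GRing.Theory Num.Theory.
Local Open Scope ring_scope.

Section Defs.
Variables (R : realType) (V : vectType R).

Definition bilinear_form (b : V -> V -> R) : Prop :=
  (forall (a : R) (u u' v : V), b (a *: u + u') v = a * b u v + b u' v) /\
  (forall (a : R) (u v v' : V), b u (a *: v + v') = a * b u v + b u v').

Definition bilinear_map (f : V -> V -> V) : Prop :=
  (forall (a : R) (u u' v : V), f (a *: u + u') v = a *: f u v + f u' v) /\
  (forall (a : R) (u v v' : V), f u (a *: v + v') = a *: f u v + f u v').

Definition skew_form (b : V -> V -> R) : Prop := forall u v, b u v = - b v u.

Definition lie_bracket (br : V -> V -> V) : Prop :=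
  [/\ bilinear_map br,
      (forall u, br u u = 0) &
      (forall u v w, br u (br v w) + br v (br w u) + br w (br u v) = 0)].

Definition quadratic_form (br : V -> V -> V) (B : V -> V -> R) : Prop :=
  [/\ bilinear_form B,
      (forall u v, B u v = B v u),
      (forall u, (forall v, B u v = 0) -> u = 0) &
      (forall u v w, B (br u v) w + B (br u w) v = 0)].

Definition cocycle2 (br : V -> V -> V) (th : V -> V -> R) : Prop :=
  [/\ bilinear_form th, skew_form th &
      (forall u v w, th (br u v) w + th (br v w) u + th (br w u) v = 0)].

Definition coboundary2 (br : V -> V -> V) (th : V -> V -> R) : Prop :=
  exists f : V -> R,
    (forall (a : R) (u v : V), f (a *: u + v) = a * f u + f v) /\
    (forall u v, th u v = - f (br u v)).

Definition H2_trivial (br : V -> V -> V) : Prop :=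
  forall th, cocycle2 br th -> coboundary2 br th.

Definition k_symplectic (br : V -> V -> V) (n k : nat) (h : {vspace V})
    (theta : 'I_k -> V -> V -> R) : Prop :=
  [/\ (0 < n)%N /\ (0 < k)%N,
      \dim (fullv : {vspace V}) = (n * k.+1)%N /\ \dim h = (n * k)%N,
      (forall u v, u \in h -> v \in h -> br u v \in h),
      (forall u, (forall i v, theta i u v = 0) -> u = 0) &
      (forall i, cocycle2 br (theta i)) /\
      (forall i u v, u \in h -> v \in h -> theta i u v = 0)].

End Defs.
Arguments bilinear_form {R V}.
Arguments bilinear_map {R V}.
Arguments skew_form {R V}.
Arguments lie_bracket {R V}.
Arguments quadratic_form {R V}.
Arguments cocycle2 {R V}.
Arguments coboundary2 {R V}.
Arguments H2_trivial {R V}.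
Arguments k_symplectic {R V}.

From HB Require Import structures.
From mathcomp Require Import all_boot all_order all_algebra.
From mathcomp Require Import reals.
From mathcomp Require Import zify.
From Stdlib Require Import Classical.
Set Implicit Arguments.
Unset Strict Implicit.
Import GRing.Theory.
Local Open Scope ring_scope.

(* Since H^2(g) = 0, each theta_i is the coboundary of a linear form, which B
   represents (Riesz): theta_i(u, v) = - B([a_i, u], v) for some a_i in g.
   Suppose B is nondegenerate on h.  As theta_i vanishes on h x h, the space
   [a_i, h] is B-orthogonal to h, hence meets h trivially and has dimension at
   most n = dim g - dim h.  The common kernel of the ad a_i on h is trivial
   (it lies in the kernel of every theta_i), so subadditivity of codimension
   gives nk = dim h <= sum_i dim [a_i, h] <= kn: every [a_i, h] has dimension
   n and g = [a_i, h] + h.  Invariance then forces a_i in h, so h being a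
   subalgebra, [a_i, h] lies in [a_i, h] :&: h = 0, and h is inside the common
   kernel of the theta_i, i.e. h = 0, contradicting dim h = nk > 0. *)

Lemma sum_bounded_eq (I : finType) (F : I -> nat) (n : nat) :
  (forall i, F i <= n)%N -> (#|I| * n <= \sum_i F i)%N -> forall i, F i = n.
Proof.
move=> le_Fn ge_sum.
have [le_sum eq_sum] := leqif_sum (fun i (_ : predT i) => leqif_eq (le_Fn i)).
move: eq_sum; rewrite eqn_leq le_sum /= sum_nat_const ge_sum => /esym/forallP eqF i.
by apply/eqP; have := eqF i.
Qed.

Lemma dim_le_sum_img (F : fieldType) (U W : vectType F) (I : Type) (r : seq I)
    (f : I -> 'Hom(U, W)) (h : {vspace U}) :
  (\dim h <= \sum_(i <- r) \dim (f i @: h) + \dim (h :&: \bigcap_(i <- r) lker (f i)))%N.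
Proof.
elim: r => [|i r IH]; first by rewrite !big_nil capvf.
rewrite !big_cons; set K := (h :&: \bigcap_(j <- r) lker (f j))%VS in IH *.
have rank_nullity := limg_ker_dim (f i) K.
have le_img : (\dim (f i @: K) <= \dim (f i @: h))%N by rewrite dimvS ?limgS ?capvSl.
have eq_ker : (K :&: lker (f i) = h :&: (lker (f i) :&: \bigcap_(j <- r) lker (f j)))%VS.
  by apply/vspaceP => x; rewrite !memv_cap -andbA [(_ \in lker _) && _]andbC.
rewrite eq_ker in rank_nullity; lia.
Qed.

Definition linear_pack {K : pzRingType} {U W : lmodType K} {f : U -> W}
    (linf : linear f) : {linear U -> W} :=
  HB.pack_for {linear U -> W} f (GRing.isLinear.Build K U W _ f linf).

Section BilinearMaps.
Variables (R : realType) (V : vectType R).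

Section Forms.
Variables (B : V -> V -> R) (bilB : bilinear_form B).

Lemma form_addl u u' v : B (u + u') v = B u v + B u' v.
Proof. by have := bilB.1 1 u u' v; rewrite scale1r mul1r. Qed.

Lemma form_addr u v v' : B u (v + v') = B u v + B u v'.
Proof. by have := bilB.2 1 u v v'; rewrite scale1r mul1r. Qed.

Lemma form0l v : B 0 v = 0.
Proof. by apply: (addrI (B 0 v)); rewrite -form_addl !addr0. Qed.

Lemma form_oppl u v : B (- u) v = - B u v.
Proof. by apply: (addrI (B u v)); rewrite -form_addl !subrr form0l. Qed.

Lemma riesz_representation :
    (forall u, (forall v, B u v = 0) -> u = 0) ->
  forall f : V -> R, (forall a u v, f (a *: u + v) = a * f u + f v) ->
  exists a, forall x, B a x = f x.
Proof.
move=> nondegB f linf.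
have linB a : linear (B a : V -> R^o) by move=> c v v'; apply: bilB.2.
pose dual a : 'Hom(V, R^o) := linfun (linear_pack (linB a)).
have dualE a x : dual a x = B a x by rewrite lfunE.
have lin_dual : linear dual.
  by move=> c a a'; apply/lfunP => x; rewrite !lfunE /= scale_lfunE !dualE bilB.1.
pose D := linfun (linear_pack lin_dual).
have inj_D : (lker D == 0)%VS.
  apply/lker0P => a a'; rewrite !lfunE /= => eq_aa'.
  apply/eqP; rewrite -subr_eq0; apply/eqP/nondegB => x.
  by rewrite form_addl form_oppl -!dualE eq_aa' subrr.
have onto_D : (limg D = fullv)%VS.
  apply/eqP; rewrite eqEdim subvf limg_dim_eq ?capfv ?(eqP inj_D) //.
  by rewrite !dimvf /dim /= muln1.
have /memv_imgP [a _ Da_f] : linfun (linear_pack (linf : linear (f : V -> R^o))) \in limg D.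
  by rewrite onto_D memvf.
by exists a => x; have := congr1 (fun g : 'Hom(V, R^o) => g x) Da_f; rewrite !lfunE.
Qed.

End Forms.

Section Brackets.
Variables (br : V -> V -> V) (lie : lie_bracket br).

Lemma bracket_addl u u' v : br (u + u') v = br u v + br u' v.
Proof. by have [[linl _] _ _] := lie; have := linl 1 u u' v; rewrite !scale1r. Qed.

Lemma bracket_addr u v v' : br u (v + v') = br u v + br u v'.
Proof. by have [[_ linr] _ _] := lie; have := linr 1 u v v'; rewrite !scale1r. Qed.

Lemma bracket_antisym u v : br u v = - br v u.
Proof.
have [_ alt _] := lie; apply/eqP; rewrite -addr_eq0; apply/eqP.
by have := alt (u + v); rewrite bracket_addl !bracket_addr !alt add0r addr0.
Qed.

Lemma bracket_linear x : linear (br x).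
Proof. by have [[_ linr] _ _] := lie; move=> c y z; apply: linr. Qed.

(* With an invariant nondegenerate form B and H^2(g) = 0, every 2-cocycle is
   theta(u, v) = - B([a, u], v) for some a: it is the coboundary of a linear
   form, which B represents as B(a, .), and invariance moves the bracket. *)
Lemma cocycle_representative (B : V -> V -> R) :
    quadratic_form br B -> H2_trivial br ->
  forall th, cocycle2 br th -> exists a, forall u v, th u v = - B (br a u) v.
Proof.
move=> [bilB symB nondegB invB] H2 th /H2 [f [linf thE]].
have [a Baf] := riesz_representation bilB nondegB linf.
exists a => u v; rewrite thE -Baf symB; congr (- _).
have := invB u v a; rewrite [br u a]bracket_antisym (form_oppl bilB).
by move/eqP; rewrite subr_eq0 => /eqP.
Qed.

End Brackets.
End BilinearMaps.

Section NondegenerateSubalgebra.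
Variables (R : realType) (V : vectType R) (br : V -> V -> V) (B : V -> V -> R).
Variables (n k : nat) (h : {vspace V}) (theta : 'I_k -> V -> V -> R) (a : 'I_k -> V).
Hypotheses (lie : lie_bracket br) (quad : quadratic_form br B).
Hypothesis ksymp : k_symplectic br n k h theta.
Hypothesis thetaE : forall i u v, theta i u v = - B (br (a i) u) v.
Hypothesis h_nondeg : forall u, u \in h -> (forall v, v \in h -> B u v = 0) -> u = 0.

Definition ad (x : V) : 'End(V) := linfun (linear_pack (bracket_linear lie x)).

Lemma adE x y : ad x y = br x y.
Proof. by rewrite lfunE. Qed.

Definition adh (i : 'I_k) : {vspace V} := (ad (a i) @: h)%VS.

(* [a_i, h] is B-orthogonal to h, because theta_i vanishes on h x h. *)
Lemma adh_orth i w v : w \in adh i -> v \in h -> B w v = 0.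
Proof.
have [_ _ _ _ [_ theta_h]] := ksymp.
case/memv_imgP => x hx -> hv; rewrite adE.
by apply/eqP; rewrite -oppr_eq0 -thetaE theta_h.
Qed.

Lemma adh_cap_h i : (adh i :&: h = 0)%VS.
Proof.
apply/vspaceP => x; rewrite memv_cap memv0; apply/andP/eqP => [[xU xh]|->].
  by apply: h_nondeg xh _ => v; apply: adh_orth xU.
by rewrite !mem0v.
Qed.

(* Since [a_i, h] meets h trivially, its dimension is at most the
   codimension n of h. *)
Lemma dim_adh_le i : (\dim (adh i) <= n)%N.
Proof.
have [_ [dimV dimh] _ _ _] := ksymp.
have := dimvS (subvf (adh i + h)); rewrite dimv_disjoint_sum ?adh_cap_h //.
rewrite dimV dimh mulnS; lia.
Qed.

(* The only element of h commuting with every a_i is 0: it lies in the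
   kernel of every theta_i. *)
Lemma common_kernel_h :
  (h :&: \bigcap_(i <- index_enum 'I_k) lker (ad (a i)) = 0)%VS.
Proof.
have [_ _ _ theta_nondeg _] := ksymp; have [bilB _ _ _] := quad.
apply/eqP; rewrite -subv0; apply/subvP => x; rewrite memv_cap memv0.
case/andP => _; rewrite memvE => /subv_bigcapP x_ker.
apply/eqP/theta_nondeg => i v; rewrite thetaE.
have := x_ker i isT; rewrite -memvE memv_ker adE => /eqP ->.
by rewrite (form0l bilB) oppr0.
Qed.

(* Counting: dim h = nk is at most the sum of the k dimensions dim [a_i, h],
   each at most n, so each equals n. *)
Lemma dim_adh_eq i : \dim (adh i) = n.
Proof.
have [_ [_ dimh] _ _ _] := ksymp.
apply: sum_bounded_eq dim_adh_le _ i.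
have := dim_le_sum_img (index_enum 'I_k) (fun i => ad (a i)) h.
by rewrite common_kernel_h dimv0 addn0 dimh card_ord mulnC.
Qed.

Lemma adh_add_h i : (adh i + h = fullv)%VS.
Proof.
have [_ [dimV dimh] _ _ _] := ksymp.
apply/eqP; rewrite eqEdim subvf /=.
by rewrite dimV dimv_disjoint_sum ?adh_cap_h // dim_adh_eq dimh mulnS.
Qed.

(* Each a_i lies in h: writing a_i = w + u with w in [a_i, h] and u in h,
   invariance shows that w is B-orthogonal to [a_i, h] + h = V. *)
Lemma representative_in_h i : a i \in h.
Proof.
have [bilB symB nondegB invB] := quad.
have : a i \in (adh i + h)%VS by rewrite adh_add_h memvf.
case/memv_addP => w w_adh [u hu a_eq].
suff w0 : w = 0 by rewrite a_eq w0 add0r.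
apply: nondegB => y.
have : y \in (adh i + h)%VS by rewrite adh_add_h memvf.
case/memv_addP => _ /memv_imgP [x hx ->] [u' hu' ->].
rewrite (form_addr bilB) (adh_orth w_adh hu') addr0 adE symB.
have aw_au : br (a i) w = - br (a i) u.
  have [_ alt _] := lie; apply/eqP; rewrite -addr_eq0 -bracket_addr //.
  by rewrite -a_eq alt.
have au_orth : B (br (a i) u) x = 0 by apply: adh_orth hx; rewrite -adE; apply: memv_img.
by have := invB (a i) w x; rewrite aw_au (form_oppl bilB) au_orth oppr0 add0r.
Qed.

(* Under the section hypotheses (in particular h nondegenerate) we reach a
   contradiction: h is a subalgebra containing every a_i, so [a_i, h] lies in
   [a_i, h] :&: h = 0; thus h is in the kernel of all theta_i, forcing h = 0
   against dim h = nk > 0. *)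
Lemma nondegenerate_subalgebra_absurd : False.
Proof.
have [[n_gt0 k_gt0] [_ dimh] h_sub theta_nondeg _] := ksymp.
have [bilB _ _ _] := quad.
have h_ne0 : h != 0%VS by rewrite -dimv_eq0 dimh muln_eq0 negb_or -!lt0n n_gt0 k_gt0.
suff : vpick h = 0 by move/eqP; rewrite vpick0 (negbTE h_ne0).
apply: theta_nondeg => i v; rewrite thetaE.
suff -> : br (a i) (vpick h) = 0 by rewrite (form0l bilB) oppr0.
apply/eqP; rewrite -memv0 -(adh_cap_h i) memv_cap -adE memv_img ?memv_pick //.
by rewrite adE h_sub ?representative_in_h ?memv_pick.
Qed.

End NondegenerateSubalgebra.

Theorem mainTheorem5 (R : realType) (V : vectType R)
    (br : V -> V -> V) (B : V -> V -> R)
    (n k : nat) (h : {vspace V}) (theta : 'I_k -> V -> V -> R) :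
  lie_bracket br ->
  quadratic_form br B ->
  H2_trivial br ->
  k_symplectic br n k h theta ->
  exists2 u : V, (u \in h) /\ (u != 0) & (forall v, v \in h -> B u v = 0).
Proof.
move=> lie quad H2 ksymp.
have [_ _ _ _ [theta_cocycle _]] := ksymp.
have /fin_all_exists [a thetaE] : forall i, exists a, forall u v, theta i u v = - B (br a u) v.
  by move=> i; exact: (cocycle_representative lie quad H2 (theta_cocycle i)).
apply: NNPP => no_isotropic.
apply: (nondegenerate_subalgebra_absurd lie quad ksymp thetaE) => u hu orth_u.
have [//|u_ne0] := eqVneq u 0.
by case: no_isotropic; exists u.
Qed.
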